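(* Let $f:\mathbb{R}\times[0,1]\to\mathbb{R}$ be measurable, let $\mu_0\in\mathbb{R}$ be fixed, let $(\xi_t)_{t\ge 0}$ be independent random variables each uniformly distributed on $[0,1]$, and define $\mu_{t+1}=\mu_t+f(\mu_t,\xi_t)$ for $t\ge 0$. Let $F(\mu,x)=\mathbb{P}_{\xi\sim U([0,1])}(f(\mu,\xi)\le x)$. Assume that $F$ is continuous at $(\mu,0)$ for every $\mu\in\mathbb{R}$, and that there exists $\mu_\circ\in\mathbb{R}$ such that (1) $F(\mu,0)<1$ for all $\mu\ge\mu_\circ$, and (2) $F(\mu,0)>0$ for all $\mu\le\mu_\circ$. Then $\limsup_{t\to\infty}|\mu_t|=\infty$ almost surely.
   Context: $U([0,1])$ denotes the uniform distribution on $[0,1]$. The sequence $(\mu_t)$ models a user's interest in a fixed item over time; the conclusion is called weak degeneracy. *)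

From HB Require Import structures.
From mathcomp Require Import all_boot all_order all_algebra.
From mathcomp Require Import all_classical all_reals all_analysis.
Set Implicit Arguments. Unset Strict Implicit. Unset Printing Implicit Defensive.
Import Order.TTheory GRing.Theory Num.Theory.
Import numFieldNormedType.Exports.
Local Open Scope classical_set_scope.
Local Open Scope ring_scope.

Definition mutually_independent {R : realType} {d : measure_display}
  {T : measurableType d} (P : probability T R) (X : nat -> T -> R) : Prop :=
  forall (s : seq nat) (B : nat -> set R), uniq s ->
    (forall i, measurable (B i)) ->
    P (\big[setI/setT]_(i <- s) (X i @^-1` B i)) =
    (\prod_(i <- s) P (X i @^-1` B i))%E.

Definition U01 {R : realType} : set R -> \bar R := uniform_prob (@ltr01 R).

Fixpoint proc {R : realType} {T : Type} (f : R * R -> R) (mu0 : R)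
  (xi : nat -> T -> R) (t : nat) (w : T) : R :=
  match t with
  | O => mu0
  | S t' => proc f mu0 xi t' w + f (proc f mu0 xi t' w, xi t' w)
  end.

Definition Fcdf {R : realType} (f : R * R -> R) (m x : R) : R :=
  fine (U01 [set u : R | f (m, u) <= x]).

(* By continuity of F at (mu, 0) and compactness of [-M, M] there is a margin
   i in (0, 1) such that from every state mu in [-M, M] the next increment is
   > i with probability >= i if mu >= mc, and <= -i with probability >= i if
   mu < mc.  A run of k > 2M/i such "good" steps started in [-M, M] moves the
   walk monotonically away from mc, hence out of [-M, M].  Given the past, each
   block of k steps is a good run with probability >= i^k, so staying in
   [-M, M] from time s on has probability <= (1 - i^k)^n for every n, i.e. zero;
   a countable union over M and s concludes.  Restricting f to R x [0, 1]
   changes neither F nor, almost surely, the walk, and makes f measurable on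
   the whole plane. *)

From HB Require Import structures.
From mathcomp Require Import all_boot all_order all_algebra.
From mathcomp Require Import all_classical all_reals all_analysis.
From mathcomp Require Import lra measurable_realfun.
Import Order.TTheory GRing.Theory Num.Theory.
Import numFieldNormedType.Exports.
Local Open Scope classical_set_scope.
Local Open Scope ring_scope.

Set Implicit Arguments. Unset Strict Implicit. Unset Printing Implicit Defensive.

(* The domain of [uniform_prob]; the noise coordinate of product spaces carries it. *)
Local Notation RL R := (g_sigma_algebraType R.-ocitv.-measurable).

Section past.
Context {R : realType} {d : measure_display} {T : measurableType d}
  (P : probability T R) (xi : nat -> T -> R).
Hypothesis mxi : forall t, measurable_fun setT (xi t).

Definition cylinders (t : nat) : set (set T) :=
  [set A | exists2 B : nat -> set R, (forall i, measurable (B i)) &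
     A = \big[setI/setT]_(i <- iota 0 t) (xi i @^-1` B i)].

Definition past t := <<s cylinders t>>.

Local Notation Past t := (g_sigma_algebraType (cylinders t)).

Lemma measurable_preimage_xi t A : measurable A -> measurable (xi t @^-1` A).
Proof. by move=> mA; rewrite -[X in measurable X]setTI; exact: mxi. Qed.

Lemma cylinders_measurable t : cylinders t `<=` measurable.
Proof.
move=> _ [B mB ->]; apply: big_ind; [exact: measurableT|exact: measurableI|].
by move=> i _; exact: measurable_preimage_xi.
Qed.

Lemma past_measurable t : past t `<=` measurable.
Proof.
apply: smallest_sub; [exact: sigma_algebra_measurable|exact: cylinders_measurable].
Qed.

Lemma past_preimage_xi i t A : (i < t)%N -> measurable A -> past t (xi i @^-1` A).
Proof.
move=> it mA; apply: sub_gen_smallest.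
exists (fun j => if j == i then A else setT); first by move=> j; case: ifP.
rewrite (big_rem i) ?mem_iota //= eqxx big1_seq ?setIT //.
move=> j /andP[_]; rewrite mem_rem_uniq ?iota_uniq // inE => /andP[/negbTE -> _].
by rewrite preimage_setT.
Qed.

Lemma past_mono t t' : (t <= t')%N -> past t `<=` past t'.
Proof.
move=> tt'; apply: smallest_sub; first exact: smallest_sigma_algebra.
move=> _ [B mB ->]; apply: sub_gen_smallest.
exists (fun j => if (j < t)%N then B j else setT); first by move=> j; case: ifP.
rewrite -(subnKC tt') iotaD big_cat /= [X in _ = _ `&` X]big1_seq ?setIT.
  by apply: eq_big_seq => j; rewrite mem_iota => /andP[_ ->].
move=> j /andP[_]; rewrite mem_iota leqNgt => /andP[/negbTE -> _].
by rewrite preimage_setT.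
Qed.

Lemma cylinders_setI_closed t : setI_closed (cylinders t).
Proof.
move=> _ _ [B mB ->] [B' mB' ->]; exists (fun i => B i `&` B' i).
  by move=> i; exact: measurableI.
by rewrite -big_split /=; apply: eq_bigr => i _; rewrite preimage_setI.
Qed.

Lemma probability_setCI (A B : set T) : measurable A -> measurable B ->
  P (~` A `&` B) = (P B - P (A `&` B))%E.
Proof.
move=> mA mB; rewrite setIC -setDE (setIC A).
by apply: measureD => //; rewrite ltey_eq fin_num_measure.
Qed.

Hypothesis indep : mutually_independent P xi.

Lemma cylinder_indep_xi t A B : cylinders t A -> measurable B ->
  P (A `&` xi t @^-1` B) = (P A * P (xi t @^-1` B))%E.
Proof.
move=> [Bs mBs ->] mB.
pose B' j := if j == t then B else Bs j.
have mB' j : measurable (B' j) by rewrite /B'; case: ifP.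
have tN : t \notin iota 0 t by rewrite mem_iota ltnn andbF.
have B'E j : j \in iota 0 t -> B' j = Bs j.
  by rewrite /B'; case: eqP => // ->; rewrite (negbTE tN).
have := indep (s := rcons (iota 0 t) t) (B := B'); rewrite rcons_uniq tN iota_uniq.
move=> /(_ isT mB'); rewrite -cats1 !big_cat /= !big_seq1.
rewrite (eq_big_seq (fun j => xi j @^-1` Bs j)); last by move=> j /B'E ->.
rewrite (eq_big_seq (fun j => P (xi j @^-1` Bs j))); last by move=> j /B'E ->.
by rewrite /B' eqxx => ->; rewrite indep ?iota_uniq.
Qed.

Lemma past_indep_xi t A B : past t A -> measurable B ->
  P (A `&` xi t @^-1` B) = (P A * P (xi t @^-1` B))%E.
Proof.
move=> pA mB; set X := xi t @^-1` B.
have mX : measurable X := measurable_preimage_xi t mB.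
have finX : P X \is a fin_num := fin_num_measure P _ mX.
apply: (@dynkin_induction _ (Past t) (cylinders t)
  (fun A => P (A `&` X) = (P A * P X)%E) erefl (@cylinders_setI_closed t)) pA.
- by rewrite setTI probability_setT mul1e.
- by move=> C cC; exact: cylinder_indep_xi.
- move=> S /past_measurable mS HS.
  have {}HS : P ((S : set T) `&` X) = (P (S : set T) * P X)%E := HS.
  change (P (~` (S : set T) `&` X) = (P (~` (S : set T)) * P X)%E).
  rewrite probability_setCI // HS probability_setC // muleBl ?mul1e //.
- move=> F /(_ _)/past_measurable mF tF HF.
  have {}HF n : P ((F n : set T) `&` X) = (P (F n : set T) * P X)%E := HF n.
  change (P (\bigcup_k (F k : set T) `&` X) = (P (\bigcup_k (F k : set T)) * P X)%E).
  rewrite setI_bigcupl (measure_bigcup P [set: nat]); last 2 first.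
  + by move=> i _; apply: measurableI.
  + exact: trivIset_setIr.
  rewrite (measure_bigcup P [set: nat]); last 2 first.
  + by move=> i _.
  + exact: tF.
  rewrite (eq_eseriesr (fun i _ => HF i)) -(fineK finX).
  under eq_eseriesr do rewrite muleC.
  rewrite nneseriesZl; first by rewrite muleC.
  by move=> i _; exact: measure_ge0.
Qed.

Hypothesis xiU : forall t (A : set R), measurable A -> P (xi t @^-1` A) = U01 A.

Section pair_law.
Variables (t : nat) (d' : measure_display) (T' : measurableType d') (Z : T -> T').
Hypothesis mZ : measurable_fun (T := Past t) setT Z.

Lemma past_preimage (A : set T') : measurable A -> past t (Z @^-1` A).
Proof. by move=> mA; have := mZ measurableT mA; rewrite setTI. Qed.

Lemma measurable_past_fun : measurable_fun setT Z.
Proof. by move=> _ A mA; rewrite setTI; apply: past_measurable; exact: past_preimage. Qed.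

Lemma prob_pair_xi_preimage (Y : set (T' * RL R)) : measurable Y ->
  P ((fun w => (Z w, xi t w)) @^-1` Y) = (\int[P]_w U01 (xsection Y (Z w)))%E.
Proof.
move=> mY.
have mZ' : Z \in mfun by rewrite inE; exact: measurable_past_fun.
have mZxi : ((fun w => (Z w, xi t w)) : T -> T' * RL R) \in mfun.
  by rewrite inE; exact: measurable_fun_pair measurable_past_fun (mxi t).
pose lawZ := distribution P (mfun_Sub mZ').
have prodE (A : set T') (B : set (RL R)) : measurable A -> measurable B ->
    distribution P (mfun_Sub mZxi) (A `*` B) = (lawZ A * U01 B)%E.
  move=> mA mB; change (P (Z @^-1` A `&` xi t @^-1` B) = (P (Z @^-1` A) * U01 B)%E).
  by rewrite (past_indep_xi (past_preimage mA) mB) xiU.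
have -> : P ((fun w => (Z w, xi t w)) @^-1` Y) = (lawZ \x uniform_prob ltr01)%E Y.
  by rewrite (product_measure_unique prodE mY).
change ((\int[lawZ]_x (uniform_prob ltr01 \o xsection Y) x)%E =
  (\int[P]_w U01 (xsection Y (Z w)))%E).
by rewrite ge0_integral_distribution //; exact: measurable_fun_xsection.
Qed.

End pair_law.

Lemma past_setI_step_ge t (mu : T -> R) (E : set T) (G : set (R * RL R)) (p : R) :
  0 <= p -> measurable_fun (T := Past t) setT mu ->
  past t E -> measurable G -> (forall m, (p%:E <= U01 (xsection G m))%E) ->
  (p%:E * P E <= P (E `&` [set w | G (mu w, xi t w)]))%E.
Proof.
move=> p0 mmu pE mG Gp.
have mE : measurable E := past_measurable pE.
(* Pairing [mu] with the indicator of [E] keeps it measurable for the past, so the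
   product law of [prob_pair_xi_preimage] applies to the event itself. *)
pose Z w := (mu w, (\1_E w : R)).
have mZ : measurable_fun (T := Past t) setT Z.
  by apply: measurable_fun_pair => //; exact: measurable_indic.
pose Y : set ((R * R) * RL R) :=
  ((fun x => x.1.2) @^-1` [set 1]) `&` ((fun x => (x.1.1, x.2)) @^-1` G).
have mY : measurable Y.
  apply: measurableI.
    rewrite -[X in measurable X]setTI.
    exact: (measurableT_comp measurable_snd measurable_fst) (measurable_set1 1).
  rewrite -[X in measurable X]setTI; apply: (_ : measurable_fun _ _) => //.
  exact: measurable_fun_pair (measurableT_comp measurable_fst measurable_fst)
    measurable_snd.
have -> : E `&` [set w | G (mu w, xi t w)] = (fun w => (Z w, xi t w)) @^-1` Y.
  apply/seteqP; split => w /=; rewrite /Y /Z /= indicE.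
    by move=> [Ew Gw]; rewrite mem_set.
  case: (boolP (w \in E)) => [/set_mem Ew [_ Gw] //|_ [/eqP]].
  by rewrite eq_sym oner_eq0.
have YE w : E w -> xsection Y (Z w) = xsection G (mu w).
  move=> Ew; rewrite /Z indicE mem_set //.
  by apply/seteqP; split => y; rewrite /xsection /Y /= => /set_mem; [case|];
    move=> *; exact/mem_set.
have mYZ : measurable_fun [set: T] (fun w => U01 (xsection Y (Z w))).
  exact: measurableT_comp (measurable_fun_xsection (uniform_prob ltr01) mY)
    (measurable_past_fun mZ).
rewrite (prob_pair_xi_preimage mZ mY).
apply: (@le_trans _ _ (\int[P]_(w in E) U01 (xsection Y (Z w)))%E); last first.
  by apply: ge0_subset_integral => // w _; exact: measure_ge0.
rewrite -(integral_cst P mE); apply: ge0_le_integral => //.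
  exact: measurable_funTS.
by move=> w Ew; rewrite YE.
Qed.

End past.

Section process.
Context {R : realType} {d : measure_display} {T : measurableType d}
  (P : probability T R) (xi : nat -> T -> R).
Hypothesis mxi : forall t, measurable_fun setT (xi t).
Hypothesis indep : mutually_independent P xi.
Hypothesis xiU : forall t (A : set R), measurable A -> P (xi t @^-1` A) = U01 A.
Variables (f : R * R -> R) (mu0 : R).
Hypothesis mf : measurable_fun setT f.

Local Notation mu := (proc f mu0 xi).
Local Notation Past t := (g_sigma_algebraType (cylinders xi t)).

Lemma measurable_past_xi t t' : (t < t')%N ->
  measurable_fun (T := Past t') setT (xi t).
Proof. by move=> tt' _ A mA; rewrite setTI; exact: past_preimage_xi. Qed.

Lemma measurable_past_proc t t' : (t <= t')%N ->
  measurable_fun (T := Past t') setT (mu t).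
Proof.
elim: t => [|t IH] tt' /=; first exact: measurable_cst.
apply: measurable_funD; first exact: IH (ltnW tt').
exact: measurableT_comp mf (measurable_fun_pair (IH (ltnW tt')) (measurable_past_xi tt')).
Qed.

Lemma measurable_proc t : measurable_fun setT (mu t).
Proof. exact: (measurable_past_fun mxi (measurable_past_proc (leqnn t))). Qed.

Variables (G : set (R * RL R)) (p : R).
Hypothesis mG : measurable G.
Hypothesis p0 : 0 <= p.
Hypothesis p1 : p <= 1.
Hypothesis Gp : forall m, (p%:E <= U01 (xsection G m))%E.

Definition good_step t := [set w | G (mu t w, xi t w)].

Definition good_run a n := \big[setI/setT]_(j <- iota a n) good_step j.

Lemma past_good_step t : past xi t.+1 (good_step t).
Proof.
have := measurable_fun_pair (measurable_past_proc (leqnSn t))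
  (measurable_past_xi (ltnSn t)) measurableT mG.
by rewrite setTI.
Qed.

Lemma past_good_run a n : past xi (a + n) (good_run a n).
Proof.
rewrite /good_run big_seq; apply: big_ind => [|A B|j].
- exact: (@measurableT _ (Past (a + n))).
- exact: (@measurableI _ (Past (a + n))).
rewrite mem_iota => /andP[_ ja]; exact: (past_mono ja (past_good_step (t := j))).
Qed.

Lemma good_run_prob_ge a n E : past xi a E ->
  ((p ^+ n)%:E * P E <= P (E `&` good_run a n))%E.
Proof.
move=> pE; elim: n => [|n IH]; first by rewrite expr0 mul1e /good_run big_nil setIT.
have pEn : past xi (a + n) (E `&` good_run a n).
  apply: (@measurableI _ (Past (a + n))); last exact: past_good_run.
  exact: (past_mono (leq_addr n a) pE).
rewrite /good_run -addn1 iotaD big_cat /= big_seq1 setIA -/(good_run a n).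
apply: le_trans (past_setI_step_ge mxi indep xiU p0
  (measurable_past_proc (leqnn (a + n))) pEn mG Gp).
by rewrite addn1 exprSr mulrC EFinM -muleA lee_wpmul2l.
Qed.

Variables (k s : nat).

Definition no_good_run n :=
  \big[setI/setT]_(j <- iota 0 n) ~` good_run (s + j * k) k.

Lemma past_no_good_run n : past xi (s + n * k) (no_good_run n).
Proof.
rewrite /no_good_run big_seq; apply: big_ind => [|A B|j].
- exact: (@measurableT _ (Past (s + n * k))).
- exact: (@measurableI _ (Past (s + n * k))).
rewrite mem_iota add0n => /andP[_ jn]; apply: (@measurableC _ (Past (s + n * k))).
apply: (past_mono _ (past_good_run (a := s + j * k) (n := k))).
by rewrite -addnA leq_add2l -mulSnr leq_mul2r jn orbT.
Qed.

Lemma no_good_run_prob_le n : (P (no_good_run n) <= ((1 - p ^+ k) ^+ n)%:E)%E.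
Proof.
elim: n => [|n IH]; first by rewrite /no_good_run big_nil expr0 probability_le1.
have pC := past_no_good_run (n := n).
have mC := past_measurable mxi pC.
have mD := past_measurable mxi (past_good_run (a := s + n * k) (n := k)).
have run_ge := good_run_prob_ge k pC.
have -> : no_good_run n.+1 = ~` good_run (s + n * k) k `&` no_good_run n.
  by rewrite /no_good_run -addn1 iotaD big_cat /= big_seq1 setIC.
rewrite probability_setCI // setIC exprS.
move: run_ge IH; rewrite -(fineK (fin_num_measure P _ mC)).
rewrite -(fineK (fin_num_measure P _ (measurableI _ _ mC mD))).
rewrite -!EFinM -EFinB !lee_fin => run_ge IH.
have pk : 0 <= 1 - p ^+ k by rewrite subr_ge0 exprn_ile1.
have := ler_wpM2l pk IH.
nra.
Qed.

Variable M : R.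

Definition stays_bounded :=
  \bigcap_(t in [set t | (s <= t)%N]) [set w | `|mu t w| <= M].

Lemma measurable_stays_bounded : measurable stays_bounded.
Proof.
apply: bigcap_measurable => [|t _]; first by exists s => /=.
have -> : [set w | `|mu t w| <= M] = mu t @^-1` `[- M, M].
  by apply/seteqP; split => w; rewrite /= in_itv /= ler_norml.
by rewrite -[X in measurable X]setTI; exact: measurable_proc.
Qed.

Hypothesis good_run_unbounded : forall w a,
  (forall j, (a <= j < a + k)%N -> good_step j w) ->
  ~ (forall j, (a <= j <= a + k)%N -> `|mu j w| <= M).

Lemma stays_bounded_sub n : stays_bounded `<=` no_good_run n.
Proof.
move=> w bdd; rewrite /no_good_run -bigcap_seq => j _ run.
apply: (good_run_unbounded (w := w) (a := s + j * k)).
  by move=> i ai; move: run; rewrite /good_run -bigcap_seq; apply; rewrite /= mem_iota.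
by move=> i /andP[si _]; apply: bdd; exact: leq_trans (leq_addr _ _) si.
Qed.

Hypothesis pk0 : 0 < p ^+ k.

Lemma stays_bounded_null : P stays_bounded = 0%E.
Proof.
have mS := measurable_stays_bounded.
apply/eqP; rewrite eq_le measure_ge0 andbT -(fineK (fin_num_measure P _ mS)) lee_fin.
have rn : ((1 - p ^+ k) ^+ n)%R @[n --> \oo] --> (0 : R).
  apply: cvg_expr; rewrite ger0_norm ?subr_ge0 ?exprn_ile1 //.
  by rewrite ltrBlDr ltrDl.
rewrite -(cvg_lim _ rn) //; apply: limr_ge; first by apply/cvg_ex; exists 0.
apply: nearW => n; rewrite -lee_fin fineK ?fin_num_measure //.
apply: le_trans (no_good_run_prob_le n).
apply: le_measure; rewrite ?inE //; last exact: stays_bounded_sub.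
exact: (past_measurable mxi (past_no_good_run (n := n))).
Qed.

End process.

Section drift.
Variable R : realType.

Definition drift_set (g : R * R -> R) (mc M i : R) : set (R * R) :=
  [set z | [|| (mc <= z.1) && (i < g z), (z.1 < mc) && (g z <= - i) | M < `|z.1|]].

Lemma drift_run_unbounded (g : R * R -> R) (u x : nat -> R) (mc M i : R)
    (k a : nat) :
  (forall j, u j.+1 = u j + g (u j, x j)) -> 0 < i -> 2 * M < k%:R * i ->
  (forall j, (a <= j < a + k)%N -> drift_set g mc M i (u j, x j)) ->
  ~ (forall j, (a <= j <= a + k)%N -> `|u j| <= M).
Proof.
move=> rec i0 kM drift bnd.
have bnd' n : (n <= k)%N -> - M <= u (a + n)%N <= M.
  by move=> nk; rewrite -ler_norml; apply: bnd; rewrite leq_addr leq_add2l.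
have step n : (n < k)%N ->
    (mc <= u (a + n)%N /\ i < g (u (a + n)%N, x (a + n)%N)) \/
    (u (a + n)%N < mc /\ g (u (a + n)%N, x (a + n)%N) <= - i).
  move=> nk; have := drift (a + n)%N; rewrite leq_addr ltn_add2l nk.
  move=> /(_ isT) /or3P[/andP[? ?]|/andP[? ?]|Mu]; [by left|by right|].
  by have := bnd' n (ltnW nk); rewrite -ler_norml leNgt Mu.
have /andP[ua1 ua2] := bnd' 0%N (leq0n k).
have /andP[uk1 uk2] := bnd' k (leqnn k).
rewrite addn0 in ua1 ua2.
case: (leP mc (u a)) => ha.
- have up n : (n <= k)%N -> mc <= u (a + n)%N /\ u a + n%:R * i <= u (a + n)%N.
    elim: n => [|n IH] nk; first by rewrite addn0 mul0r addr0.
    have [h1 h2] := IH (ltnW nk).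
    rewrite addnS rec -natr1 mulrDl mul1r.
    by case: (step n nk) => [[_ gi]|[hm _]]; [split; lra|lra].
  have [_ h] := up k (leqnn k); lra.
- have down n : (n <= k)%N -> u (a + n)%N < mc /\ u (a + n)%N <= u a - n%:R * i.
    elim: n => [|n IH] nk; first by rewrite addn0 mul0r subr0.
    have [h1 h2] := IH (ltnW nk).
    rewrite addnS rec -natr1 mulrDl mul1r.
    by case: (step n nk) => [[hm _]|[_ gi]]; [lra|split; lra].
  have [_ h] := down k (leqnn k); lra.
Qed.

End drift.

Section margin.
Variable R : realType.

Lemma near_continuous_pm (g : R * R -> R) (x e : R) :
  {for (x, 0), continuous g} -> 0 < e ->
  \forall x' \near x & i \near 0^'+,
    [/\ `|g (x, 0) - g (x', i)| < e, `|g (x, 0) - g (x', - i)| < e & i < e].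
Proof.
move=> /cvgrPdist_lt cg e0; have [[A B] /= [nA /nbhs_ballP [r /= r0 Br]] ABg] := cg e e0.
exists (A, [set i | B i /\ B (- i) /\ i < e]) => [|[x' i] /= [Ax' [Bi [BNi ie]]]].
  split => //; apply: (@cvg_within _ (nbhs (0 : R))); apply/nbhs_ballP.
  exists (Num.min r e); first by rewrite /= lt_min r0 e0.
  move=> j; rewrite /ball /= sub0r normrN lt_min => /andP[jr je].
  split; first by apply: Br; rewrite /ball /= sub0r normrN.
  split; first by apply: Br; rewrite /ball /= sub0r opprK.
  by move: je; rewrite ltr_norml => /andP[].
by split => //; apply: (ABg (_, _)).
Qed.

Lemma near_margin_up (g : R * R -> R) (x : R) :
  {for (x, 0), continuous g} -> g (x, 0) < 1 ->
  \forall x' \near x & i \near 0^'+, g (x', i) <= 1 - i.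
Proof.
move=> cg g1; have e0 : 0 < (1 - g (x, 0)) / 2 by rewrite divr_gt0 // subr_gt0.
apply: filterS (near_continuous_pm cg e0) => -[x' i] /= [+ _ ie].
by rewrite ltr_norml => /andP[h1 h2]; lra.
Qed.

Lemma near_margin_lo (g : R * R -> R) (x : R) :
  {for (x, 0), continuous g} -> 0 < g (x, 0) ->
  \forall x' \near x & i \near 0^'+, i <= g (x', - i).
Proof.
move=> cg g0; have e0 : 0 < g (x, 0) / 2 by rewrite divr_gt0.
apply: filterS (near_continuous_pm cg e0) => -[x' i] /= [_ + ie].
by rewrite ltr_norml => /andP[h1 h2]; lra.
Qed.

Lemma near2_and (I : Type) (F : set_system I) {FF : Filter F} (x : R)
    (P1 P2 : R -> I -> Prop) :
  (\forall x' \near x & i \near F, P1 x' i) ->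
  (\forall x' \near x & i \near F, P2 x' i) ->
  \forall x' \near x & i \near F, P1 x' i /\ P2 x' i.
Proof.
move=> [[A1 B1] [nA1 nB1] s1] [[A2 B2] [nA2 nB2] s2].
exists (A1 `&` A2, B1 `&` B2); first by split; exact: filterI.
by move=> [a b] /= [[? ?] [? ?]]; split; [exact: (s1 (a, b))|exact: (s2 (a, b))].
Qed.

Lemma exists_uniform_margin (g : R * R -> R) (mc M : R) :
  (forall m, {for (m, 0), continuous g}) ->
  (forall m, mc <= m -> g (m, 0) < 1) -> (forall m, m <= mc -> 0 < g (m, 0)) ->
  exists2 i, 0 < i < 1 & forall x, - M <= x <= M ->
    (mc <= x -> g (x, i) <= 1 - i) /\ (x < mc -> i <= g (x, - i)).
Proof.
move=> cg g1 g0.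
pose Q i x := (mc <= x -> g (x, i) <= 1 - i) /\ (x < mc -> i <= g (x, - i)).
have local x : `[- M, M]%classic x -> \forall x' \near x & i \near 0^'+, Q i x'.
  move=> _; case: (ltgtP x mc) => xmc.
  - apply: filterS (near2_and (near_margin_lo (cg x) (g0 _ (ltW xmc)))
      (filter_prod1 (lt_nbhsl xmc))) => -[x' i] /= [lo x'mc].
    by split => // h; have := le_lt_trans h x'mc; rewrite ltxx.
  - apply: filterS (near2_and (near_margin_up (cg x) (g1 _ (ltW xmc)))
      (filter_prod1 (lt_nbhsr xmc))) => -[x' i] /= [up mcx'].
    by split => // h; have := lt_trans h mcx'; rewrite ltxx.
  - rewrite -xmc in g1 g0 *.
    by apply: filterS (near2_and (near_margin_up (cg x) (g1 _ (lexx x)))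
      (near_margin_lo (cg x) (g0 _ (lexx x)))) => -[x' i] /= [up lo].
have cov := iffLR (compact_near_coveringP _) (@segment_compact R (- M) M) R
  0^'+ Q _ local.
near (0 : R)^'+ => i.
exists i.
  by apply/andP; split; near: i; [exact: nbhs_right_gt|exact: nbhs_right_lt].
move=> x xM; have : `[- M, M]%classic `<=` Q i by near: i; exact: cov.
by apply; rewrite /= in_itv.
Unshelve. all: by end_near.
Qed.

End margin.

Lemma limn_esup_abs_pinfty {R : realType} (u : nat -> R) :
  (forall N n : nat, exists2 t, (n <= t)%N & N%:R < `|u t|) ->
  limn_esup (fun t => (`|u t|)%:E) = +oo%E.
Proof.
move=> unbdd; rewrite limn_esup_lim; apply: cvg_lim => //.
apply/cvgeyPge => M; apply: nearW => n.
have [t nt Mt] := unbdd (Num.Def.archi_bound `|M|) n.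
apply: le_trans (ereal_sup_ubound _); last by exists t.
rewrite lee_fin (le_trans (ler_norm M)) // ltW //.
exact: lt_trans (archi_boundP (normr_ge0 M)) Mt.
Qed.

Section cdf.
Variable R : realType.
Local Notation D01 := ([set: R] `*` `[0, 1]%classic).

Lemma eq_U01 (A B : set R) :
  A `&` `[0, 1]%classic = B `&` `[0, 1]%classic -> U01 A = U01 B.
Proof.
by move=> AB; rewrite /U01 /uniform_prob integral_uniform_pdf AB -integral_uniform_pdf.
Qed.

Lemma Fcdf_restrict01 (f : R * R -> R) : Fcdf (f \_ D01) = Fcdf f.
Proof.
apply/funext => m; apply/funext => x.
rewrite /Fcdf (@eq_U01 _ [set u | f (m, u) <= x]) //.
by apply/seteqP; split => u /= [fu u01]; split => //; move: fu; rewrite patchE mem_set.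
Qed.

Lemma measurable_section_le (f : R * R -> R) (m x : R) : measurable_fun setT f ->
  measurable [set u | f (m, u) <= x].
Proof.
move=> mf; rewrite -[X in measurable X]setTI.
by apply: measurable_fun_le => //; exact: measurable_fun_pair2.
Qed.

Lemma U01_le_Fcdf (f : R * R -> R) (m x : R) : measurable_fun setT f ->
  U01 [set u | f (m, u) <= x] = (Fcdf f m x)%:E.
Proof.
by move=> mf; rewrite /Fcdf fineK // fin_num_measure //; exact: measurable_section_le.
Qed.

Lemma measurable_drift_set (f : R * R -> R) (mc M i : R) : measurable_fun setT f ->
  measurable (drift_set f mc M i : set (R * RL R)).
Proof.
move=> mf.
have mfst : measurable_fun setT (fun z : R * RL R => z.1) := measurable_fst.
have mb : measurable_fun setT (fun z : R * RL R =>
    [|| (mc <= z.1) && (i < f z), (z.1 < mc) && (f z <= - i) | M < `|z.1|]).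
  apply: measurable_or; [|apply: measurable_or]; try apply: measurable_and;
    first [apply: measurable_fun_ler|apply: measurable_fun_ltr];
    first [exact: measurable_cst|exact: mfst|exact: mf|
           by apply: measurableT_comp => //; exact: normr_measurable].
by have := mb measurableT [set true] I; rewrite setTI.
Qed.

Lemma U01_setC (A : set R) : measurable A -> U01 (~` A) = (1 - U01 A)%E.
Proof. by move=> mA; rewrite /U01 probability_setC. Qed.

Lemma le_U01 (A B : set R) : measurable A -> measurable B -> A `<=` B ->
  (U01 A <= U01 B)%E.
Proof. by move=> mA mB; apply: (le_measure (uniform_prob ltr01)); rewrite inE. Qed.

Lemma drift_set_xsection_ge (f : R * R -> R) (mc M i : R) :
  measurable_fun setT f -> 0 <= i <= 1 ->
  (forall x, - M <= x <= M ->
    (mc <= x -> Fcdf f x i <= 1 - i) /\ (x < mc -> i <= Fcdf f x (- i))) ->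
  forall m, (i%:E <= U01 (xsection (drift_set f mc M i : set (R * RL R)) m))%E.
Proof.
move=> mf /andP[i0 i1] margin m.
have mle x : measurable [set u | f (m, u) <= x] := measurable_section_le m x mf.
have mX : measurable (xsection (drift_set f mc M i : set (R * RL R)) m).
  exact: measurable_xsection (measurable_drift_set mc M i mf).
have [Mm|] := ltP M `|m|.
  have -> : xsection (drift_set f mc M i : set (R * RL R)) m = setT.
    by apply/seteqP; split => u // _; apply/mem_set; rewrite /drift_set /= Mm !orbT.
  by rewrite /U01 probability_setT lee_fin.
rewrite ler_norml => mM; have [up lo] := margin m mM.
have [mcm|mmc] := leP mc m.
- apply: (le_trans _ (le_U01 (measurableC (mle i)) mX _)).
    by rewrite U01_setC // U01_le_Fcdf // lee_fin; have := up mcm; lra.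
  move=> u /= /negP fu; apply/mem_set.
  by rewrite /drift_set /= mcm /= ltNge fu.
- apply: (le_trans _ (le_U01 (mle (- i)) mX _)).
    by rewrite U01_le_Fcdf // lee_fin; exact: lo.
  move=> u /= fu; apply/mem_set.
  by rewrite /drift_set /= mmc fu /= orbT.
Qed.

Lemma proc_restrict01 {T : Type} (f : R * R -> R) (mu0 : R) (xi : nat -> T -> R) w :
  (forall t, `[0, 1]%classic (xi t w)) ->
  forall t, proc (f \_ D01) mu0 xi t w = proc f mu0 xi t w.
Proof.
by move=> in01; elim=> //= t ->; rewrite patchE mem_set //; split => //; exact: in01.
Qed.

End cdf.

Lemma ae_xi_in01 {R : realType} {d : measure_display} {T : measurableType d}
    (P : probability T R) (xi : nat -> T -> R) :
  (forall t, measurable_fun setT (xi t)) ->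
  (forall t (A : set R), measurable A -> P (xi t @^-1` A) = U01 A) ->
  \forall w \ae P, forall t, `[0, 1]%classic (xi t w).
Proof.
move=> mxi xiU; apply: ae_foralln => t.
have mC : measurable (~` `[0, 1]%classic : set R).
  by apply: measurableC; exact: measurable_itv.
exists (xi t @^-1` ~` `[0, 1]%classic); split.
- by rewrite -[X in measurable X]setTI; exact: mxi.
- apply: eq_trans (xiU t _ mC) _.
  rewrite (@eq_U01 _ _ set0); first by rewrite /U01; exact: measure0.
  by rewrite setICl set0I.
- by move=> w.
Qed.

Section weak_degeneracy.
Context {R : realType} {d : measure_display} {T : measurableType d}
  (P : probability T R) (f : R * R -> R) (mu0 : R) (xi : nat -> T -> R) (mc : R).
Hypothesis mf : measurable_fun setT f.
Hypothesis mxi : forall t, measurable_fun setT (xi t).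
Hypothesis xiU : forall t (A : set R), measurable A -> P (xi t @^-1` A) = U01 A.
Hypothesis indep : mutually_independent P xi.
Hypothesis cont :
  forall m : R, {for (m, 0), continuous (fun p : R * R => Fcdf f p.1 p.2)}.
Hypothesis Fup : forall m, mc <= m -> Fcdf f m 0 < 1.
Hypothesis Flo : forall m, m <= mc -> 0 < Fcdf f m 0.

Lemma stays_bounded_prob0 s M : P (stays_bounded xi f mu0 s M) = 0%E.
Proof.
have [i /andP[i0 i1] margin] := exists_uniform_margin M cont Fup Flo.
have i01 : 0 <= i <= 1 by rewrite !ltW.
pose k := Num.Def.archi_bound (2 * `|M| / i).
have kM : 2 * M < k%:R * i.
  have Mi : 0 <= 2 * `|M| / i by rewrite divr_ge0 ?mulr_ge0 ?normr_ge0 ?ltW.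
  have := archi_boundP Mi; rewrite -/k ltr_pdivrMr // => kMi.
  by have := ler_norm M; lra.
apply: (stays_bounded_null mxi indep xiU mf (measurable_drift_set mc M i mf)
  (ltW i0) (ltW i1) (drift_set_xsection_ge mf i01 margin) s _ (exprn_gt0 k i0)).
move=> w a; apply: (drift_run_unbounded (u := fun j => proc f mu0 xi j w)
  (x := fun j => xi j w)) => //.
Qed.

Lemma ae_not_stays_bounded :
  \forall w \ae P, forall N s : nat, ~ stays_bounded xi f mu0 s N%:R w.
Proof.
apply: ae_foralln => N; apply: ae_foralln => s.
exists (stays_bounded xi f mu0 s N%:R); split.
- exact: measurable_stays_bounded.
- exact: stays_bounded_prob0.
- by move=> w /contrapT.
Qed.

End weak_degeneracy.

Theorem theorem1 (R : realType) (d : measure_display) (T : measurableType d)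
  (P : probability T R) (f : R * R -> R) (mu0 : R) (xi : nat -> T -> R) :
  measurable_fun ([set: R] `*` (`[0, 1] : set R)) f ->
  (forall t, measurable_fun [set: T] (xi t)) ->
  (forall t (A : set R), measurable A -> P (xi t @^-1` A) = U01 A) ->
  mutually_independent P xi ->
  (forall m : R, {for (m, 0), continuous (fun p : R * R => Fcdf f p.1 p.2)}) ->
  (exists mc : R,
      (forall m, mc <= m -> Fcdf f m 0 < 1) /\
      (forall m, m <= mc -> 0 < Fcdf f m 0)) ->
  \forall w \ae P,
    limn_esup (fun t => (`| proc f mu0 xi t w |)%:E) = +oo%E.
Proof.
move=> mf mxi xiU indep cont [mc [Fup Flo]].
pose D : set (R * R) := [set: R] `*` `[0, 1]%classic.
have mD : measurable D by apply: measurableX => //; exact: measurable_itv.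
pose f' := f \_ D.
have mf' : measurable_fun setT f' := (measurable_restrictT f mD).1 mf.
rewrite -(Fcdf_restrict01 f) in cont Fup Flo.
have unbounded := ae_not_stays_bounded mu0 mf' mxi xiU indep cont Fup Flo.
apply: (filterS2 _ _ (ae_xi_in01 mxi xiU) unbounded) => w in01 unbdd.
apply: limn_esup_abs_pinfty => N n.
have := unbdd N n; rewrite /stays_bounded => /existsNP[t /not_implyP[nt bnd]].
by exists t => //; rewrite -(proc_restrict01 _ _ in01) ltNge; apply/negP.
Qed.
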